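(* Let $\Omega\subset\mathbb{R}^d$ be a convex polygonal domain, $\mathrm{Wi}>0$, and let $\vec u:\Omega\times[0,T]\to\mathbb{R}^d$ be a given, sufficiently smooth velocity field with $\vec u\cdot\vec n=0$ on $\partial\Omega$, and $\Delta t=T/N$ with $\Delta t\,\|\vec u\|_{C^0([0,T];W^{1,\infty}(\Omega))}<1$; write $t^n=n\Delta t$. Let $\boldsymbol\sigma$ be a sufficiently smooth solution of the Oldroyd-B constitutive law $$\partial_t\boldsymbol\sigma+(\vec u\cdot\nabla)\boldsymbol\sigma-(\nabla\vec u)\boldsymbol\sigma-\boldsymbol\sigma(\nabla\vec u)^T=-\tfrac{1}{\mathrm{Wi}}(\boldsymbol\sigma-\vec I).$$ For $t\in[\Delta t,T]$ set $\vec y^t_{\Delta t}(\vec x)=\vec x-\Delta t\,\vec u(\vec x,t)$, $\vec F^t_{\Delta t}(\vec x)=\vec I+\Delta t\,\nabla\vec u(\vec x,t)$, and for a tensor field $\vec\zeta$ define $$D_{(\vec u,\Delta t)}\vec\zeta(\vec x,t)=\tfrac{1}{\Delta t}\big(\vec\zeta(\vec x,t)-\vec F^t_{\Delta t}(\vec x)\,\vec\zeta(\vec y^t_{\Delta t}(\vec x),t-\Delta t)\,\vec F^t_{\Delta t}(\vec x)^T\big).$$ Consider the semidiscrete scheme: $\vec\Sigma^0=\boldsymbol\sigma^0$ and, for $n\ge1$ (with $t=t^n$), $$\tfrac{1}{\Delta t}\big(\vec\Sigma^n(\vec x)-\vec F^{t}_{\Delta t}(\vec x)\vec\Sigma^{n-1}(\vec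 y^{t}_{\Delta t}(\vec x))\vec F^{t}_{\Delta t}(\vec x)^T\big)=-\tfrac{1}{\mathrm{Wi}}(\vec\Sigma^n(\vec x)-\vec I).$$ Then this semidiscrete scheme is a consistent, first order approximation, in the sense that its local truncation error is $\mathcal{O}(\Delta t^2)$: if one step of the scheme is performed at time $t=t^n$ starting from the exact value $\boldsymbol\sigma(\cdot,t-\Delta t)$ in place of $\vec\Sigma^{n-1}$, the resulting $\vec\Sigma^n$ satisfies $\boldsymbol\sigma(\vec x,t)-\vec\Sigma^n(\vec x)=\mathcal{O}(\Delta t^2)$.
   Context: $(\nabla\vec u)_{ij}=\partial u_i/\partial x_j$; $\vec I$ is the identity tensor; $\mathrm{Wi}$ is the Weissenberg number. *)

From HB Require Import structures.
From mathcomp Require Import all_boot all_order all_algebra.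
From mathcomp Require Import all_classical all_reals all_analysis.
Set Implicit Arguments. Unset Strict Implicit. Unset Printing Implicit Defensive.
Import Order.TTheory GRing.Theory Num.Theory.
Import numFieldNormedType.Exports.
Local Open Scope classical_set_scope.
Local Open Scope ring_scope.

Section Defs.
Variable R : realType.
Variable d : nat.

Definition pt := 'rV[R]_d.
Definition spt := ('rV[R]_d * R)%type.

Definition dotv (a x : 'rV[R]_d) : R := \sum_(i < d) a 0 i * x 0 i.

Definition polyhedron (m : nat) (a : 'I_m -> 'rV[R]_d) (b : 'I_m -> R)
  : set 'rV[R]_d := [set x | forall i, dotv (a i) x < b i].

Definition cpolyhedron (m : nat) (a : 'I_m -> 'rV[R]_d) (b : 'I_m -> R)
  : set 'rV[R]_d := [set x | forall i, dotv (a i) x <= b i].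

Definition convex_polygonal_domain (m : nat) (a : 'I_m -> 'rV[R]_d)
  (b : 'I_m -> R) : Prop :=
  (polyhedron a b !=set0) /\
  (exists r : R, forall x, polyhedron a b x -> `|x| <= r).

(* Twice continuously differentiable, via directional derivatives:
   all first and second directional derivatives exist everywhere and the
   second ones are continuous (this implies C^2). *)
Definition C2 (V W : normedModType R) (f : V -> W) : Prop :=
  forall v w : V,
    (forall x, derivable f x v) /\
    (forall x, derivable ('D_v f) x w) /\
    continuous ('D_w ('D_v f)).

Definition evec (j : 'I_d) : 'rV[R]_d := delta_mx 0 j.

Definition dx (W : normedModType R) (j : 'I_d) (f : spt -> W) : spt -> W :=
  'D_((evec j, 0) : spt) f.
Definition dt (W : normedModType R) (f : spt -> W) : spt -> W :=
  'D_((0, 1) : spt) f.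

Definition gradu (u : spt -> 'rV[R]_d) (p : spt) : 'M[R]_d :=
  \matrix_(i < d, j < d) (dx j u p) 0 i.

Definition advect (u : spt -> 'rV[R]_d) (s : spt -> 'M[R]_d) (p : spt)
  : 'M[R]_d := \sum_(j < d) (u p) 0 j *: dx j s p.

Definition oldroydB (Wi : R) (u : spt -> 'rV[R]_d) (s : spt -> 'M[R]_d)
  (p : spt) : Prop :=
  dt s p + advect u s p - gradu u p *m s p - s p *m (gradu u p)^T
  = - Wi^-1 *: (s p - 1%:M).

Definition yfoot (u : spt -> 'rV[R]_d) (Dt t : R) (x : 'rV[R]_d) : 'rV[R]_d :=
  x - Dt *: u (x, t).
Definition Fdef (u : spt -> 'rV[R]_d) (Dt t : R) (x : 'rV[R]_d) : 'M[R]_d :=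
  1%:M + Dt *: gradu u (x, t).

Definition scheme_step (Wi : R) (u : spt -> 'rV[R]_d) (Dt t : R)
  (Sprev S : 'rV[R]_d -> 'M[R]_d) (x : 'rV[R]_d) : Prop :=
  Dt^-1 *: (S x - Fdef u Dt t x *m Sprev (yfoot u Dt t x) *m (Fdef u Dt t x)^T)
  = - Wi^-1 *: (S x - 1%:M).

End Defs.

From HB Require Import structures.
From mathcomp Require Import all_boot all_order all_algebra.
From mathcomp Require Import all_classical all_reals all_analysis.
From mathcomp Require Import ring lra.
Import Order.TTheory GRing.Theory Num.Theory.
Import numFieldNormedType.Exports.
Local Open Scope classical_set_scope.
Local Open Scope ring_scope.

Set Implicit Arguments.
Unset Strict Implicit.
Unset Printing Implicit Defensive.

(* Solving the scheme for the new iterate S and inserting the Oldroyd-B law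
   at p = (x, t) gives the exact identity
     (1 + Dt/Wi) (sigma p - S) =
       - (Y - sigma p + Dt (u.grad sigma + d_t sigma) p)
       - Dt (G (Y - sigma p) + (Y - sigma p) G^T) - Dt^2 G Y G^T,
   where Y = sigma (x - Dt u p, t - Dt) and G = grad u p.  The first term is
   the second-order Taylor remainder of sigma along the characteristic
   displacement -Dt (u p, 1), the second is Dt times a first-order increment
   of sigma, and the last is Dt^2 times a bounded quantity.  All constants come
   from bounds on u, sigma and their first and second derivatives on a ball
   containing Omega x [0, T] and the feet of the characteristics.
   Since C2 only provides directional derivatives, the Taylor estimates are
   obtained by moving along one coordinate direction at a time and applying the
   one-dimensional mean value theorem on each segment. *)

Section DirectionalTaylor.
Variables (R : realType) (V : normedModType R).
Implicit Types (f : V -> R) (q z b : V) (c s B r : R).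

Let line_quotientE f z b s :
  (fun h : R => h^-1 *: (((fun r : R => f (z + r *: b)) \o shift s) (h *: 1)
     - f (z + s *: b))) =
  (fun h : R => h^-1 *: ((f \o shift (z + s *: b)) (h *: b) - f (z + s *: b))).
Proof.
apply/funext => h /=; congr (_ *: (f _ - _)).
by rewrite /shift /= [_%:A]mulr1 scalerDl addrCA addrC.
Qed.

Lemma derivable_line f z b s :
  derivable f (z + s *: b) b -> derivable (fun r : R => f (z + r *: b)) s 1.
Proof. by rewrite /derivable line_quotientE. Qed.

Lemma derive_line f z b s :
  'D_1 (fun r : R => f (z + r *: b)) s = 'D_b f (z + s *: b).
Proof. by rewrite /derive line_quotientE. Qed.

Lemma mvt_line f z b c :
  (forall s, `|s| <= `|c| -> derivable f (z + s *: b) b) ->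
  exists s, `|s| <= `|c| /\ f (z + c *: b) - f z = c * 'D_b f (z + s *: b).
Proof.
move=> fD; pose g r := f (z + r *: b).
have g_derive r : `|r| <= `|c| -> is_derive r 1 g ('D_b f (z + r *: b)).
  move=> rc; apply: DeriveDef; first exact/derivable_line/fD.
  exact: derive_line.
have mvt a a' : a <= a' -> (forall r, r \in `[a, a'] -> `|r| <= `|c|) ->
    exists2 s, `|s| <= `|c| & g a' - g a = 'D_b f (z + s *: b) * (a' - a).
  move=> aa' seg; have [||s /seg sc gE] :=
    MVT_segment (f := g) (df := fun r => 'D_b f (z + r *: b)) aa'.
  - by move=> r /subset_itv_oo_cc/seg/g_derive.
  - by apply: derivable_within_continuous => r /seg/g_derive; case.
  - by exists s.
have g0 : g 0 = f z by rewrite /g scale0r addr0.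
case: (leP 0 c) => c0.
- have [|s sc gE] := mvt 0 c c0.
    move=> r; rewrite in_itv /= => /andP[r0 rc].
    by rewrite !ger0_norm ?(le_trans r0 rc).
  by exists s; split => //; rewrite -g0 gE subr0 mulrC.
- have [|s sc gE] := mvt c 0 (ltW c0).
    move=> r; rewrite in_itv /= => /andP[cr r0].
    by rewrite (ler0_norm r0) (ltr0_norm c0) lerN2.
  by exists s; split => //; rewrite -g0 -opprB gE sub0r mulrN mulrC opprK.
Qed.

Lemma taylor_line_le f q b c B :
  (forall s, `|s| <= `|c| -> derivable f (q + s *: b) b) ->
  (forall s, `|s| <= `|c| -> derivable ('D_b f) (q + s *: b) b) ->
  (forall s, `|s| <= `|c| -> `|'D_b ('D_b f) (q + s *: b)| <= B) ->
  `|f (q + c *: b) - f q - c * 'D_b f q| <= `|c| ^+ 2 * B.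
Proof.
move=> fD fDD DDB; have B0 : 0 <= B.
  by apply: le_trans (DDB 0 _); rewrite ?normr0.
have [s [sc ->]] := mvt_line fD; rewrite -mulrBr.
have [s' [s's ->]] := mvt_line (fun r rs => fDD r (le_trans rs sc)).
rewrite !normrM expr2 -mulrA ler_wpM2l //.
by apply: ler_pM => //; apply: DDB; apply: le_trans sc.
Qed.

Let ball_step q z b c r :
  `|b| <= 1 -> `|z - (q + c *: b)| <= r - `|c| -> `|z - q| <= r.
Proof.
move=> b1 zr; have -> : z - q = (z - (q + c *: b)) + c *: b.
  by rewrite opprD addrA subrK.
rewrite (le_trans (ler_normD _ _)) // normrZ.
by have := ler_piMr (normr_ge0 c) b1; lra.
Qed.

Let line_in_ball q b s r : `|b| <= 1 -> `|s| <= r -> `|q + s *: b - q| <= r.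
Proof.
by move=> b1 sr; rewrite addrC addKr normrZ (le_trans _ sr) // ler_piMr.
Qed.

Variables (I : Type) (e : I -> V).
Hypothesis e_le1 : forall i, `|e i| <= 1.

Lemma norm_path_increment_le f (c : I -> R) B (s : seq I) q r :
  \sum_(i <- s) `|c i| <= r ->
  (forall z i, `|z - q| <= r -> derivable f z (e i)) ->
  (forall z i, `|z - q| <= r -> `|'D_(e i) f z| <= B) ->
  `|f (q + \sum_(i <- s) c i *: e i) - f q| <= B * \sum_(i <- s) `|c i|.
Proof.
elim: s q r => [|i s IH] q r.
  by rewrite !big_nil addr0 subrr normr0 mulr0.
rewrite !big_cons addrA => sr fD DB.
have s0 : 0 <= \sum_(j <- s) `|c j| by apply: sumr_ge0.
have cr : `|c i| <= r by lra.
have on_line t : `|t| <= `|c i| -> `|q + t *: e i - q| <= r.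
  by move=> tc; apply: line_in_ball (e_le1 i) (le_trans tc cr).
have tail := IH (q + c i *: e i) (r - `|c i|) ltac:(lra)
  (fun z j zr => fD z j (ball_step (e_le1 i) zr))
  (fun z j zr => DB z j (ball_step (e_le1 i) zr)).
rewrite -(subrKA (f (q + c i *: e i))).
have [t [/on_line tr ->]] :=
  mvt_line (z := q) (c := c i) (fun t tc => fD _ i (on_line t tc)).
rewrite (le_trans (ler_normD _ _)) // normrM.
have := ler_wpM2l (normr_ge0 (c i)) (DB _ i tr); lra.
Qed.

Lemma norm_path_taylor_le f (c : I -> R) B (s : seq I) q r :
  \sum_(i <- s) `|c i| <= r ->
  (forall z i, `|z - q| <= r -> derivable f z (e i)) ->
  (forall z i j, `|z - q| <= r -> derivable ('D_(e i) f) z (e j)) ->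
  (forall z i j, `|z - q| <= r -> `|'D_(e j) ('D_(e i) f) z| <= B) ->
  `|f (q + \sum_(i <- s) c i *: e i) - f q - \sum_(i <- s) c i * 'D_(e i) f q|
    <= B * (\sum_(i <- s) `|c i|) ^+ 2.
Proof.
elim: s q r => [|i s IH] q r.
  by rewrite !big_nil addr0 !subrr normr0 expr0n mulr0.
rewrite !big_cons addrA => sr fD fDD DDB.
pose S : R := \sum_(j <- s) `|c j|; set q' := q + c i *: e i.
have {}sr : `|c i| + S <= r := sr.
have S0 : 0 <= S by apply: sumr_ge0.
have cr : `|c i| <= r by lra.
have on_line t : `|t| <= `|c i| -> `|q + t *: e i - q| <= r.
  by move=> tc; apply: line_in_ball (e_le1 i) (le_trans tc cr).
have q_in : `|q - q| <= r by rewrite subrr normr0 (le_trans _ cr).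
have B0 : 0 <= B := le_trans (normr_ge0 _) (DDB q i i q_in).
have Sr : S <= r - `|c i| by lra.
have tail := IH q' _ Sr (fun z j zr => fD z j (ball_step (e_le1 i) zr))
  (fun z j k zr => fDD z j k (ball_step (e_le1 i) zr))
  (fun z j k zr => DDB z j k (ball_step (e_le1 i) zr)).
have head : `|f q' - f q - c i * 'D_(e i) f q| <= `|c i| ^+ 2 * B.
  by apply: taylor_line_le => t /on_line tr;
    [apply: fD | apply: fDD | apply: DDB].
have shift_derivatives : `|\sum_(j <- s) c j * ('D_(e j) f q' - 'D_(e j) f q)|
    <= S * (`|c i| * B).
  rewrite (le_trans (ler_norm_sum _ _ _)) // /S big_distrl /=.
  apply: ler_sum => j _; rewrite normrM ler_wpM2l //.
  have [t [/on_line tr ->]] := mvt_line (z := q) (b := e i) (c := c i)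
    (fun t tc => fDD _ j i (on_line t tc)).
  by rewrite normrM ler_wpM2l // DDB.
have sumBE : \sum_(j <- s) c j * ('D_(e j) f q' - 'D_(e j) f q) =
    \sum_(j <- s) c j * 'D_(e j) f q' - \sum_(j <- s) c j * 'D_(e j) f q.
  by rewrite -sumrB; apply: eq_bigr => j _; rewrite mulrBr.
move: shift_derivatives; rewrite sumBE => sd.
set T1 := f (q' + _) - f q' - _ in tail; set T2 := _ - _ in sd.
set T3 := _ - _ in head.
have -> : f (q' + \sum_(j <- s) c j *: e j) - f q -
    (c i * 'D_(e i) f q + \sum_(j <- s) c j * 'D_(e j) f q) = T1 + T2 + T3.
  by rewrite /T1 /T2 /T3; ring.
rewrite (le_trans (ler_normD _ _)) //.
rewrite (le_trans (lerD (ler_normD _ _) (lexx _))) //.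
change (`|T1| + `|T2| + `|T3| <= B * (`|c i| + S) ^+ 2).
have {}tail : `|T1| <= B * S ^+ 2 := tail.
have := mulr_ge0 (mulr_ge0 B0 (normr_ge0 (c i))) S0; nra.
Qed.

End DirectionalTaylor.

Section MatrixNorm.
Variable R : realType.

Lemma mxentry_le_norm m n (A : 'M[R]_(m, n)) i j : `|A i j| <= `|A|.
Proof.
rewrite [leRHS]/Num.Def.normr /= mx_normrE.
exact: (le_bigmax 0 (fun ij : 'I_m * 'I_n => `|A ij.1 ij.2|) (i, j)).
Qed.

Lemma mx_norm_le m n (A : 'M[R]_(m, n)) (B : R) :
  0 <= B -> (forall i j, `|A i j| <= B) -> `|A| <= B.
Proof.
move=> B0 AB; rewrite [leLHS]/Num.Def.normr /= mx_normrE.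
by apply: bigmax_le => // -[i j] _; apply: AB.
Qed.

Lemma mulmx_norm_le m n p (A : 'M[R]_(m, n)) (B : 'M[R]_(n, p)) :
  `|A *m B| <= n%:R * `|A| * `|B|.
Proof.
apply: mx_norm_le => [|i j]; first by rewrite !mulr_ge0.
rewrite mxE (le_trans (ler_norm_sum _ _ _)) //.
under eq_bigr do rewrite normrM.
apply: le_trans (ler_sum _ (fun k _ => ler_pM (normr_ge0 _) (normr_ge0 _)
   (mxentry_le_norm A i k) (mxentry_le_norm B k j))) _.
by rewrite sumr_const card_ord -mulrA mulr_natl.
Qed.

Lemma trmx_norm m n (A : 'M[R]_(m, n)) : `|A^T| = `|A|.
Proof.
apply/le_anti/andP; split; apply: mx_norm_le => // i j.
  by rewrite mxE mxentry_le_norm.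
by have := mxentry_le_norm A^T j i; rewrite mxE.
Qed.

End MatrixNorm.

Section SpaceTimeCoordinates.
Variables (R : realType) (d : nat).
Implicit Types (p q v : spt R d).

(* Index [lift ord_max j] is the space direction j, index [ord_max] is time. *)
Definition st_basis (l : 'I_d.+1) : spt R d :=
  if unlift ord_max l is Some j then (evec R j, 0) else (0, 1).

Definition st_coord (l : 'I_d.+1) q : R :=
  if unlift ord_max l is Some j then q.1 0 j else q.2.

Lemma big_ord_recr_lift (W : nmodType) (F : 'I_d.+1 -> W) :
  \sum_l F l = \sum_(j < d) F (lift ord_max j) + F ord_max.
Proof.
rewrite big_ord_recr /=; congr (_ + _); apply: eq_bigr => j _.
by congr F; apply: val_inj; exact/esym/lift_max.
Qed.

Lemma st_basis_lift j : st_basis (lift ord_max j) = (evec R j, 0).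
Proof. by rewrite /st_basis liftK. Qed.

Lemma st_basis_max : st_basis ord_max = (0, 1).
Proof. by rewrite /st_basis unlift_none. Qed.

Lemma st_coord_lift j q : st_coord (lift ord_max j) q = q.1 0 j.
Proof. by rewrite /st_coord liftK. Qed.

Lemma st_coord_max q : st_coord ord_max q = q.2.
Proof. by rewrite /st_coord unlift_none. Qed.

Lemma st_basis_norm l : `|st_basis l| <= 1.
Proof.
rewrite /st_basis prod_normE; case: (unlift ord_max l) => [j|] /=.
  rewrite normr0 ge_max ler01 andbT; apply: mx_norm_le => // i k.
  by rewrite mxE; case: (_ && _); rewrite ?normr1 ?normr0.
by rewrite normr0 normr1 ge_max ler01 lexx.
Qed.

Lemma st_coord_norm l q : `|st_coord l q| <= `|q|.
Proof.
rewrite /st_coord prod_normE le_max; case: (unlift ord_max l) => [j|].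
  by rewrite (mxentry_le_norm q.1 0 j).
by rewrite lexx orbT.
Qed.

Lemma st_coordZ l (c : R) q : st_coord l (c *: q) = c * st_coord l q.
Proof.
by rewrite /st_coord; case: (unlift ord_max l) => [j|] //=; rewrite mxE.
Qed.

Lemma sum_st_coord_le q : \sum_l `|st_coord l q| <= d.+1%:R * `|q|.
Proof.
apply: le_trans (ler_sum _ (fun l _ => st_coord_norm l q)) _.
by rewrite sumr_const card_ord mulr_natl.
Qed.

Let fst_sum (r : seq 'I_d.+1) (F : 'I_d.+1 -> spt R d) :
  (\sum_(l <- r) F l).1 = \sum_(l <- r) (F l).1.
Proof. by elim: r => [|l r IH]; rewrite ?big_nil ?big_cons //= IH. Qed.

Let snd_sum (r : seq 'I_d.+1) (F : 'I_d.+1 -> spt R d) :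
  (\sum_(l <- r) F l).2 = \sum_(l <- r) (F l).2.
Proof. by elim: r => [|l r IH]; rewrite ?big_nil ?big_cons //= IH. Qed.

Lemma st_coord_decomp q : q = \sum_l st_coord l q *: st_basis l.
Proof.
case: q => x t; rewrite [RHS]surjective_pairing fst_sum snd_sum.
rewrite !big_ord_recr_lift st_coord_max st_basis_max /= scaler0 addr0.
congr pair.
  apply/rowP => k; rewrite summxE (bigD1 k) //= big1 ?addr0.
    by rewrite st_coord_lift st_basis_lift !mxE /= eqxx mulr1.
  move=> j /negbTE jk.
  by rewrite st_coord_lift st_basis_lift !mxE /= eq_sym jk mulr0.
rewrite big1 ?add0r; first by rewrite [_%:A]mulr1.
by move=> j _; rewrite st_basis_lift /= scaler0.
Qed.

Lemma norm_le_sum_st_coord q : `|q| <= \sum_l `|st_coord l q|.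
Proof.
rewrite {1}(st_coord_decomp q) (le_trans (ler_norm_sum _ _ _)) //.
by apply: ler_sum => l _; rewrite normrZ ler_piMr ?st_basis_norm.
Qed.

End SpaceTimeCoordinates.

Section SpaceTimeTaylor.
Variables (R : realType) (d m n : nat).
Implicit Types (h g : spt R d -> 'M[R]_(m, n)) (p q v z : spt R d).
Local Notation e := (@st_basis R d).
Local Notation crd := (@st_coord R d).

(* The differential is assembled from partial derivatives, since C2 alone does
   not make v |-> 'D_v h p linear. *)
Definition pdiff h p v : 'M[R]_(m, n) := \sum_l crd l v *: 'D_(e l) h p.

Lemma pdiffZ h p c v : pdiff h p (c *: v) = c *: pdiff h p v.
Proof.
by rewrite /pdiff scaler_sumr; apply: eq_bigr => l _; rewrite st_coordZ scalerA.
Qed.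

Lemma derivable_mxentry h z w a b :
  derivable h z w -> derivable (fun q => h q a b) z w.
Proof. by move/(derivable_mxP h z w).1; apply. Qed.

Lemma derive_mxentry h z w a b :
  derivable h z w -> 'D_w (fun q => h q a b) z = 'D_w h z a b.
Proof. by move=> hD; rewrite (derive_mx hD) mxE. Qed.

Lemma st_increment_le h p v B :
  (forall z l, derivable h z (e l)) ->
  (forall z l, `|z - p| <= \sum_l `|crd l v| -> `|'D_(e l) h z| <= B) ->
  `|h (p + v) - h p| <= B * \sum_l `|crd l v|.
Proof.
move=> hD DB; have p_in : `|p - p| <= \sum_l `|crd l v|.
  by rewrite subrr normr0 sumr_ge0.
have B0 : 0 <= B := le_trans (normr_ge0 _) (DB p ord_max p_in).
apply: mx_norm_le => [|a b]; first by rewrite mulr_ge0 ?sumr_ge0.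
rewrite {1}(st_coord_decomp v) !mxE.
apply: (norm_path_increment_le (@st_basis_norm R d) (f := fun q => h q a b))
  (lexx _) _ _ => [z l _|z l zr]; first exact: derivable_mxentry.
by rewrite derive_mxentry // (le_trans (mxentry_le_norm _ a b)) ?DB.
Qed.

Lemma st_taylor_le h p v B :
  (forall z k, derivable h z (e k)) ->
  (forall z k l, derivable ('D_(e k) h) z (e l)) ->
  (forall z k l, `|z - p| <= \sum_l `|crd l v| ->
     `|'D_(e l) ('D_(e k) h) z| <= B) ->
  `|h (p + v) - h p - pdiff h p v| <= B * (\sum_l `|crd l v|) ^+ 2.
Proof.
move=> hD hDD DDB; have p_in : `|p - p| <= \sum_l `|crd l v|.
  by rewrite subrr normr0 sumr_ge0.
have B0 : 0 <= B := le_trans (normr_ge0 _) (DDB p ord_max ord_max p_in).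
apply: mx_norm_le => [|a b]; first by rewrite mulr_ge0 ?sqr_ge0.
have Dentry k : 'D_(e k) (fun q => h q a b) = (fun q => 'D_(e k) h q a b).
  by apply/funext => z; apply: derive_mxentry.
rewrite {1}(st_coord_decomp v) !mxE summxE.
rewrite (eq_bigr (fun k => crd k v * 'D_(e k) (fun q => h q a b) p)) => [|k _].
  2: by rewrite mxE derive_mxentry.
apply: (norm_path_taylor_le (@st_basis_norm R d) (f := fun q => h q a b))
  (lexx _) _ _ _ => [z k _|z k l _|z k l zr]; rewrite ?Dentry.
- exact: derivable_mxentry (hD z k).
- exact: derivable_mxentry (hDD z k l).
- by rewrite derive_mxentry // (le_trans (mxentry_le_norm _ a b)) ?DDB.
Qed.

End SpaceTimeTaylor.

Section C2Bounds.
Variables (R : realType) (d : nat).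
Local Notation e := (@st_basis R d).
Local Notation crd := (@st_coord R d).

Definition bounded_on_balls (W : normedModType R) (h : spt R d -> W) :=
  forall rho, exists B, 0 <= B /\ forall q, `|q| <= rho -> `|h q| <= B.

Lemma fin_uniform_bound (I : finType) (P : I -> R -> Prop) :
  (forall i B B', B <= B' -> P i B -> P i B') ->
  (forall i, exists B, P i B) -> exists B, 0 <= B /\ forall i, P i B.
Proof.
move=> Pmono /choice[f Pf].
exists (Num.max 0 (\big[Num.max/0]_i f i)); split; first by rewrite le_max lexx.
move=> i; apply: Pmono (Pf i).
by rewrite le_max (le_bigmax 0 f i) orbT.
Qed.

Lemma continuous_bounded_on_balls (W : normedModType R) (h : spt R d -> W) :
  continuous h -> bounded_on_balls h.
Proof.
move=> hC rho.
pose K : set (spt R d) :=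
  [set x : 'rV[R]_d | forall i, `[- rho, rho]%classic (x ord0 i)] `*`
  `[- rho, rho]%classic.
have K_compact : compact K.
  apply: compact_setX; last exact: segment_compact.
  apply: (@rV_compact _ _ (fun=> `[- rho, rho]%classic)) => _.
  exact: segment_compact.
have /ex_strict_bound_gt0[B B0 /= hB] : bounded_set (h @` K).
  exact/compact_bounded/continuous_compact/K_compact/continuous_subspaceT.
exists B; split => [|q qr]; first exact: ltW.
apply/ltW/hB; exists q => //; split => [i|] /=; rewrite in_itv /= -ler_norml.
  apply: le_trans qr; apply: le_trans (mxentry_le_norm q.1 ord0 i) _.
  by rewrite prod_normE le_max lexx.
by apply: le_trans qr; rewrite prod_normE le_max lexx orbT.
Qed.

Section Matrix.
Variables m n : nat.
Implicit Types h g : spt R d -> 'M[R]_(m, n).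

Lemma bounded_on_balls_of_partials h :
  (forall z l, derivable h z (e l)) ->
  (forall l, bounded_on_balls ('D_(e l) h)) -> bounded_on_balls h.
Proof.
move=> hD DhB rho; pose r := d.+1%:R * Num.max rho 0.
have [||B [B0 hB]] := fin_uniform_bound
  (P := fun l B => forall q, `|q| <= r -> `|'D_(e l) h q| <= B).
- by move=> l B B' BB' hB q /hB/le_trans; apply.
- by move=> l; have [B [_ hB]] := DhB l r; exists B.
exists (`|h 0| + B * r); split => [|q qr].
  by rewrite addr_ge0 ?mulr_ge0 // le_max lexx orbT.
have sum_le : \sum_l `|crd l q| <= r.
  apply: le_trans (sum_st_coord_le q) _; apply: ler_wpM2l => //.
  by rewrite le_max qr.
have incr : `|h (0 + q) - h 0| <= B * \sum_l `|crd l q|.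
  apply: st_increment_le hD _ => z l; rewrite subr0 => zr.
  exact/hB/(le_trans zr sum_le).
rewrite add0r in incr.
have := ler_normD (h q - h 0) (h 0); rewrite subrK.
have := ler_wpM2l B0 sum_le; lra.
Qed.

Variable g : spt R d -> 'M[R]_(m, n).
Hypothesis gC2 : C2 g.

Let gD z k : derivable g z (e k). Proof. exact: (gC2 _ _).1. Qed.
Let gDD z k l : derivable ('D_(e k) g) z (e l).
Proof. exact: (gC2 _ _).2.1. Qed.

Lemma C2_partial_bounded k : bounded_on_balls ('D_(e k) g).
Proof.
apply: bounded_on_balls_of_partials (gDD^~ k) _ => l.
exact/continuous_bounded_on_balls/(gC2 _ _).2.2.
Qed.

Lemma C2_bounded : bounded_on_balls g.
Proof. exact: bounded_on_balls_of_partials gD C2_partial_bounded. Qed.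

Lemma C2_local_bounds rho : exists B, 0 <= B /\ forall p v,
  `|p| <= rho -> `|v| <= rho -> [/\ `|g (p + v)| <= B,
    forall l, `|'D_(e l) g p| <= B, `|g (p + v) - g p| <= B * `|v|
    & `|g (p + v) - g p - pdiff g p v| <= B * `|v| ^+ 2].
Proof.
pose K : R := d.+1%:R; pose rho' := rho + K * rho.
have [||B [B0 hB]] := fin_uniform_bound (I := ('I_d.+1 * 'I_d.+1)%type)
  (P := fun kl B => forall q, `|q| <= rho' -> [/\ `|g q| <= B,
     `|'D_(e kl.1) g q| <= B & `|'D_(e kl.2) ('D_(e kl.1) g) q| <= B]).
- move=> kl B B' BB' hB q /hB[gB DgB DDgB].
  by split; [apply: le_trans gB BB' | apply: le_trans DgB BB' |
    apply: le_trans DDgB BB'].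
- move=> [k l]; have [B0 [B00 h0]] := C2_bounded rho'.
  have [B1 [B10 h1]] := C2_partial_bounded k rho'.
  have [B2 [B20 h2]] := continuous_bounded_on_balls (gC2 (e k) (e l)).2.2 rho'.
  exists (B0 + B1 + B2) => q qr.
  split; [apply: le_trans (h0 q qr) _ | apply: le_trans (h1 q qr) _ |
    apply: le_trans (h2 q qr) _]; lra.
have K1 : 1 <= K by rewrite ler1n.
exists (K ^+ 2 * B); split => [|p v pr vr]; first by rewrite mulr_ge0 ?sqr_ge0.
have sum_le := sum_st_coord_le v; rewrite -/K in sum_le.
have sum_ge0 : 0 <= \sum_l `|crd l v| by apply: sumr_ge0.
have in_ball z : `|z - p| <= \sum_l `|crd l v| -> `|z| <= rho'.
  move=> zp; have := ler_normD (z - p) p; rewrite subrK.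
  have := ler_wpM2l (le_trans ler01 K1) vr; rewrite /rho'; lra.
have p_in : `|p| <= rho' by apply: in_ball; rewrite subrr normr0.
have B_le : B <= K ^+ 2 * B by rewrite ler_peMl // expr_ge1.
split.
- have /in_ball pv_in : `|p + v - p| <= \sum_l `|crd l v|.
    by rewrite addrC addKr norm_le_sum_st_coord.
  by have [? _ _] := hB (ord0, ord0) _ pv_in; apply: le_trans B_le.
- by move=> l; have [_ ? _] := hB (l, l) p p_in; apply: le_trans B_le.
- apply: le_trans (st_increment_le (B := B) gD _) _ => [z l /in_ball zr|].
    by have [_ ? _] := hB (l, l) z zr.
  have := ler_wpM2l B0 sum_le; have : K <= K ^+ 2 by rewrite expr2 ler_peMl.
  have := normr_ge0 v; nra.
- apply: le_trans (st_taylor_le (B := B) gD gDD _) _ => [z k l /in_ball zr|].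
    by have [_ _ ?] := hB (k, l) z zr.
  have -> : K ^+ 2 * B * `|v| ^+ 2 = B * (K * `|v|) ^+ 2 by ring.
  rewrite ler_wpM2l // ler_pXn2r ?nnegrE //.
  by rewrite mulr_ge0 // (le_trans ler01 K1).
Qed.

End Matrix.
End C2Bounds.

Section SchemeConsistency.
Variables (R : realType) (d : nat).
Local Notation e := (@st_basis R d).

Lemma gradu_norm_le (u : spt R d -> 'rV[R]_d) p B :
  0 <= B -> (forall l, `|'D_(e l) u p| <= B) -> `|gradu u p| <= B.
Proof.
move=> B0 DuB; apply: mx_norm_le => // i j.
rewrite mxE /dx -st_basis_lift.
apply: le_trans (DuB (lift ord_max j)); exact: mxentry_le_norm.
Qed.

Lemma pdiff_material (u : spt R d -> 'rV[R]_d) (s : spt R d -> 'M[R]_d) p :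
  pdiff s p (u p, 1) = advect u s p + dt s p.
Proof.
rewrite /pdiff big_ord_recr_lift st_coord_max st_basis_max /= scale1r.
rewrite /advect /dt; apply: (congr1 (fun M => M + _)); apply: eq_bigr => j _.
by rewrite st_coord_lift st_basis_lift.
Qed.

Lemma characteristic_step (u : spt R d -> 'rV[R]_d) (D t : R) x :
  (x, t) + (- D) *: (u (x, t), 1) = (yfoot u D t x, t - D).
Proof. by congr pair; rewrite /= ?scaleNr // [_%:A]mulr1. Qed.

Lemma norm_characteristic_le (w : 'rV[R]_d) (D : R) :
  0 <= D -> `|(- D) *: ((w, 1) : spt R d)| <= D * (`|w| + 1).
Proof.
move=> D0; rewrite prod_norm_scale normrN ger0_norm // ler_wpM2l //.
by rewrite prod_normE /= normr1 ge_max lerDl ler01 lerDr normr_ge0.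
Qed.

Lemma conj_expand (G Y : 'M[R]_d) (D : R) :
  (1%:M + D *: G) *m Y *m (1%:M + D *: G)^T =
  Y + D *: (G *m Y + Y *m G^T) + D ^+ 2 *: (G *m Y *m G^T).
Proof.
rewrite linearD /= trmx1 linearZ /= mulmxDl mul1mx -scalemxAl.
rewrite mulmxDr mulmx1 mulmxDl -!scalemxAr -scalemxAl scalerA scalerDr !addrA.
by rewrite expr2.
Qed.

Lemma scheme_error_identity (Sg S Y G P : 'M[R]_d) (D W : R) : D != 0 ->
  D^-1 *: (S - (1%:M + D *: G) *m Y *m (1%:M + D *: G)^T) =
    - W^-1 *: (S - 1%:M) ->
  P - G *m Sg - Sg *m G^T = - W^-1 *: (Sg - 1%:M) ->
  (1 + D / W) *: (Sg - S) = - (Y - Sg + D *: P)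
    - D *: (G *m (Y - Sg) + (Y - Sg) *m G^T) - D ^+ 2 *: (G *m Y *m G^T).
Proof.
rewrite conj_expand mulmxBr mulmxBl => D0.
move: (G *m Y) (Y *m G^T) (G *m Sg) (Sg *m G^T) (G *m Y *m G^T).
move=> GY YG GS SG GYG scheme law; apply/matrixP => a b.
move/matrixP/(_ a b): scheme; move/matrixP/(_ a b): law; rewrite !mxE.
move/eqP; rewrite -subr_eq0; set X := _ - _ => /eqP law.
move/eqP; rewrite -subr_eq0; set Z := _ - _ => /eqP scheme.
apply/eqP; rewrite -subr_eq0 (_ : _ - _ = D * X - D * Z).
  by rewrite law scheme !mulr0 subr0.
by rewrite /X /Z [D * (D^-1 * _ - _)]mulrBr mulVKf //; ring.
Qed.


Lemma scheme_local_error_le (Sg S Y G P : 'M[R]_d) (D W K B Bg h : R) :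
  0 < D -> 0 < W -> 0 <= h <= D * K -> 0 <= B -> 0 <= Bg ->
  D^-1 *: (S - (1%:M + D *: G) *m Y *m (1%:M + D *: G)^T) =
    - W^-1 *: (S - 1%:M) ->
  P - G *m Sg - Sg *m G^T = - W^-1 *: (Sg - 1%:M) ->
  `|Y - Sg + D *: P| <= B * h ^+ 2 -> `|Y - Sg| <= B * h ->
  `|G| <= Bg -> `|Y| <= B ->
  `|Sg - S| <= (B * K ^+ 2 + 2 * d%:R * Bg * B * K + d%:R ^+ 2 * Bg ^+ 2 * B)
                * D ^+ 2.
Proof.
move=> D0 W0 /andP[h0 hDK] B0 Bg0 scheme law taylor increment GB YB.
have K0 : 0 <= K by rewrite -(pmulr_rge0 _ D0) (le_trans h0 hDK).
have {}taylor : `|Y - Sg + D *: P| <= B * (D * K) ^+ 2.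
  by rewrite (le_trans taylor) // ler_wpM2l // ler_pXn2r ?nnegrE ?(le_trans h0).
have {}increment : `|Y - Sg| <= B * (D * K).
  by rewrite (le_trans increment) // ler_wpM2l.
have identity := scheme_error_identity (lt0r_neq0 D0) scheme law.
have GTB : `|G^T| <= Bg by rewrite trmx_norm.
have GZ : `|G *m (Y - Sg)| <= d%:R * Bg * (B * (D * K)).
  by apply: le_trans (mulmx_norm_le _ _) _; rewrite ler_pM ?mulr_ge0 ?ler_wpM2l.
have ZG : `|(Y - Sg) *m G^T| <= d%:R * (B * (D * K)) * Bg.
  by apply: le_trans (mulmx_norm_le _ _) _; rewrite ler_pM ?mulr_ge0 ?ler_wpM2l.
have GY : `|G *m Y| <= d%:R * Bg * B.
  by apply: le_trans (mulmx_norm_le _ _) _; rewrite ler_pM ?mulr_ge0 ?ler_wpM2l.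
have GYG : `|G *m Y *m G^T| <= d%:R * (d%:R * Bg * B) * Bg.
  by apply: le_trans (mulmx_norm_le _ _) _; rewrite ler_pM ?mulr_ge0 ?ler_wpM2l.
have growth : `|Sg - S| <= `|(1 + D / W) *: (Sg - S)|.
  have c1 : 1 <= 1 + D / W by rewrite lerDl divr_ge0 // ltW.
  by rewrite mx_normZ ger0_norm ?(le_trans ler01 c1) // ler_peMl.
rewrite identity in growth; apply: le_trans growth _.
have D2 : 0 <= D ^+ 2 by rewrite sqr_ge0.
have triangle : `|- (Y - Sg + D *: P) - D *: (G *m (Y - Sg) + (Y - Sg) *m G^T)
    - D ^+ 2 *: (G *m Y *m G^T)| <= `|Y - Sg + D *: P|
    + D * `|G *m (Y - Sg) + (Y - Sg) *m G^T| + D ^+ 2 * `|G *m Y *m G^T|.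
  apply: le_trans (ler_normB _ _) _; rewrite mx_normZ (ger0_norm D2) lerD2r.
  by apply: le_trans (ler_normB _ _) _; rewrite normrN mx_normZ (gtr0_norm D0).
apply: le_trans triangle _.
have A12 := ler_normD (G *m (Y - Sg)) ((Y - Sg) *m G^T).
have := ler_wpM2l (ltW D0) (le_trans A12 (lerD GZ ZG)).
have := ler_wpM2l D2 GYG.
have -> : (B * K ^+ 2 + 2 * d%:R * Bg * B * K + d%:R ^+ 2 * Bg ^+ 2 * B)
      * D ^+ 2 = B * (D * K) ^+ 2
    + D * (d%:R * Bg * (B * (D * K)) + d%:R * (B * (D * K)) * Bg)
    + D ^+ 2 * (d%:R * (d%:R * Bg * B) * Bg) by ring.
lra.
Qed.

End SchemeConsistency.

Lemma time_grid_bounds (R : realType) (T : R) (N n : nat) :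
  0 < T -> (0 < N)%N -> (1 <= n <= N)%N ->
  [/\ 0 < T / N%:R, T / N%:R <= T & 0 <= n%:R * (T / N%:R) <= T].
Proof.
move=> T0 N0 /andP[n1 nN]; have N1 : 1 <= N%:R :> R by rewrite ler1n.
have Dt0 : 0 < T / N%:R by rewrite divr_gt0 ?ltr0n.
split => //; first by rewrite ler_pdivrMr ?ltr0n // ler_peMr // ltW.
have NDt : N%:R * (T / N%:R) = T by rewrite mulrC divfK // lt0r_neq0 ?ltr0n.
have n_le : n%:R <= N%:R :> R by rewrite ler_nat.
apply/andP; split; first by rewrite mulr_ge0 // ltW.
by rewrite -[leRHS]NDt ler_wpM2r // ltW.
Qed.

Lemma norm_spacetime_le (R : realType) (d : nat) (x : 'rV[R]_d) (t r T : R) :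
  `|x| <= r -> 0 <= t <= T -> `|((x, t) : spt R d)| <= Num.max r 0 + T.
Proof.
move=> xr /andP[t0 tT]; rewrite prod_normE ge_max /= (ger0_norm t0).
have r_le : r <= Num.max r 0 by rewrite le_max lexx.
have r0_le : 0 <= Num.max r 0 by rewrite le_max lexx orbT.
apply/andP; split; lra.
Qed.

Theorem proposition2 (R : realType) (d m : nat)
  (a : 'I_m -> 'rV[R]_d) (b : 'I_m -> R)
  (T Wi : R) (u : spt R d -> 'rV[R]_d) (sigma : spt R d -> 'M[R]_d) :
  convex_polygonal_domain a b ->
  0 < T -> 0 < Wi ->
  C2 u -> C2 sigma ->
  (* u . n = 0 on the boundary of Omega *)
  (forall t x, 0 <= t <= T -> cpolyhedron a b x ->
     forall i, dotv (a i) x = b i -> dotv (a i) (u (x, t)) = 0) ->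
  (* sigma solves the Oldroyd-B law in Omega x [0,T] *)
  (forall t x, 0 <= t <= T -> polyhedron a b x -> oldroydB Wi u sigma (x, t)) ->
  exists C : R, forall N : nat, (0 < N)%N ->
    let Dt := T / N%:R in
    (* Dt * ||u||_{C^0([0,T]; W^{1,oo}(Omega))} < 1 *)
    (exists M : R, Dt * M < 1 /\
       forall t x, 0 <= t <= T -> polyhedron a b x ->
         `|u (x, t)| <= M /\ `|gradu u (x, t)| <= M) ->
    forall n : nat, (1 <= n <= N)%N ->
      let t := n%:R * Dt in
      forall S : 'rV[R]_d -> 'M[R]_d,
        (forall x, polyhedron a b x ->
           scheme_step Wi u Dt t (fun y => sigma (y, t - Dt)) S x) ->
        forall x, polyhedron a b x ->
          `|sigma (x, t) - S x| <= C * Dt ^+ 2.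
Proof.
move=> [_ [r Omega_bounded]] T0 Wi0 uC2 sC2 _ law.
pose rho := Num.max r 0 + T.
have [Bu [Bu0 uB]] := C2_local_bounds uC2 rho.
pose K := Bu + 1; have K0 : 0 <= K := addr_ge0 Bu0 ler01.
have [Bs [Bs0 sB]] := C2_local_bounds sC2 (rho + T * K).
exists (Bs * K ^+ 2 + 2 * d%:R * Bu * Bs * K + d%:R ^+ 2 * Bu ^+ 2 * Bs).
move=> N N0 Dt _ n nN t S scheme x Omega_x.
have [Dt0 Dt_le_T t_in] := time_grid_bounds T0 N0 nN.
have p_in : `|((x, t) : spt R d)| <= rho.
  exact: norm_spacetime_le (Omega_bounded x Omega_x) t_in.
have rho0 : 0 <= rho := le_trans (normr_ge0 _) p_in.
have [|u_le Du_le _ _] := uB _ 0 p_in; first by rewrite normr0.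
rewrite addr0 in u_le.
pose v : spt R d := (- Dt) *: (u (x, t), 1).
have v_le : `|v| <= Dt * K.
  apply: le_trans (norm_characteristic_le _ (ltW Dt0)) _.
  by rewrite (ler_wpM2l (ltW Dt0)) // lerD2r.
have TK0 : 0 <= T * K by rewrite mulr_ge0 // ltW.
have v_in : `|v| <= rho + T * K.
  by rewrite (le_trans v_le) // (le_trans (ler_wpM2r K0 Dt_le_T)) ?lerDr.
have [Y_le _ increment taylor] := sB _ v (ler_wpDr TK0 p_in) v_in.
rewrite characteristic_step in Y_le increment taylor.
rewrite pdiffZ pdiff_material scaleNr opprK in taylor.
move: (law t x t_in Omega_x); rewrite /oldroydB [dt _ _ + _]addrC => law_xt.
apply: (scheme_local_error_le Dt0 Wi0 _ Bs0 Bu0 (scheme x Omega_x) law_xt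
  taylor increment (gradu_norm_le Bu0 Du_le) Y_le).
by rewrite normr_ge0 v_le.
Qed.
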